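(* Under the hypotheses and notation of the context, if $\sigma_k\ge\kappa_r\alpha$ for all $k\ge0$, then $$\|z^{k+1}-z^k\|_M\le C\min_{0\le j\le k}\rho^{k-j}\|z^{j+1}-z^j\|_M\quad\text{for all }k\ge0.$$
   Context: $X$ is a finite-dimensional real Hilbert space; $T:X\rightrightarrows X$ is maximal monotone with $\Omega:=T^{-1}(0)\neq\emptyset$. $M$ is self-adjoint positive definite with $\lambda_{\max}(M)=1$; $\|z\|_M=\sqrt{\langle z,Mz\rangle}$, $\operatorname{dist}_M(z,D)=\min_{d\in D}\|d-z\|_M$, $\operatorname{dist}=\operatorname{dist}_I$. $\mathcal{J}_{\sigma M^{-1}T}:=(I+\sigma M^{-1}T)^{-1}$. $z^+$ is an output of IGPPAstep$(z,\sigma,\eta,\delta,\gamma,M)$ if $z^+=\gamma w+(1-\gamma)z$ for some $w$ with $\|w-\mathcal{J}_{\sigma M^{-1}T}(z)\|_M\le\min\{\eta,\delta\|w-z\|_M\}$. Hypotheses: $T$ satisfies bounded metric subregularity (for every $r>0$ there is $\kappa_r>0$ with $\operatorname{dist}(z,\Omega)\le\kappa_r\operatorname{dist}(0,T(z))$ for all $\|z\|\le r$); $z^0\in X$, $\gamma\in(0,2)$, $\delta\in[0,1/2)$; $\{\sigma_k\},\{\eta_k\}$ nonnegative with $\sum_k\eta_k<\infty$, $\inf_k\sigma_k>0$; $z^{k+1}$ is an output of IGPPAstep$(z^k,\sigma_k,\eta_k,\delta,\gamma,M)$ for all $k$; $\bar z^0$ is a point of $\Omega$ nearest to $z^0$ in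 $\|\cdot\|_M$; $r\ge\|\bar z^0\|+\frac{1}{\lambda_{\min}(M)}(\operatorname{dist}_M(z^0,\Omega)+\gamma\sum_k\eta_k)$ and $\kappa_r$ is a subregularity constant at this $r$; $\alpha>0$ is such that $\rho:=\frac{1}{1-\delta}\Big(\sqrt{1-\frac{\min\{\gamma,2\gamma-\gamma^2\}\alpha^2}{\alpha^2+1}}+\delta\big(\frac{\min\{\gamma,1\}}{\sqrt{\alpha^2+1}}+1\big)\Big)<1$; $C:=\frac{1+\delta}{(1-\delta)(1-\sqrt{1/(\alpha^2+1)})}$. *)

(* R : realType, X = 'cV[R]_n with the standard inner product. *)
From HB Require Import structures.
From mathcomp Require Import all_boot all_order all_algebra.
From mathcomp Require Import all_classical all_reals all_analysis.
Set Implicit Arguments. Unset Strict Implicit. Unset Printing Implicit Defensive.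
Import Order.TTheory GRing.Theory Num.Theory.
Local Open Scope ring_scope.
Local Open Scope classical_set_scope.

Section Defs.
Variables (R : realType) (n : nat).
Implicit Types (x y z : 'cV[R]_n) (M : 'M[R]_n).

Definition ip x y : R := \sum_(i < n) x i 0 * y i 0.
Definition enorm x : R := Num.sqrt (ip x x).
Definition normM M z : R := Num.sqrt (ip z (M *m z)).
Definition dist z (D : set 'cV[R]_n) : R := inf [set enorm (d - z) | d in D].

Definition monotone (T : 'cV[R]_n -> set 'cV[R]_n) :=
  forall x y u v, T x u -> T y v -> 0 <= ip (x - y) (u - v).
Definition maximal_monotone (T : 'cV[R]_n -> set 'cV[R]_n) :=
  monotone T /\
  forall x u, (forall y v, T y v -> 0 <= ip (x - y) (u - v)) -> T x u.

Definition zeros (T : 'cV[R]_n -> set 'cV[R]_n) : set 'cV[R]_n :=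
  [set z | T z 0].

Definition self_adjoint_pd M :=
  M^T = M /\ forall z, z != 0 -> 0 < ip z (M *m z).

Definition is_lambda_max M (l : R) :=
  eigenvalue M l /\ forall a, eigenvalue M a -> a <= l.
Definition is_lambda_min M (l : R) :=
  eigenvalue M l /\ forall a, eigenvalue M a -> l <= a.

(* p = J_{sigma M^{-1} T}(z), i.e. z \in p + sigma M^{-1} T(p) *)
Definition resolvent_at (T : 'cV[R]_n -> set 'cV[R]_n) M (sigma : R) z p :=
  exists2 v, T p v & z = p + sigma *: (invmx M *m v).

Definition IGPPAstep_out (T : 'cV[R]_n -> set 'cV[R]_n) z sigma eta delta
    gamma M zp :=
  exists w, zp = gamma *: w + (1 - gamma) *: z /\
    exists2 p, resolvent_at T M sigma z p &
      normM M (w - p) <= Num.min eta (delta * normM M (w - z)).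

(* metric subregularity on the ball of radius r with constant kappa:
   dist(z, Omega) <= kappa dist(0, T z) for ||z|| <= r
   (dist(0, T z) = inf over v in T z of ||v||, +oo if T z is empty) *)
Definition subregular_at (T : 'cV[R]_n -> set 'cV[R]_n) (r kappa : R) :=
  forall z, enorm z <= r -> forall v, T z v -> dist z (zeros T) <= kappa * enorm v.

Definition bounded_metric_subregular (T : 'cV[R]_n -> set 'cV[R]_n) :=
  forall r : R, 0 < r -> exists2 kappa : R, 0 < kappa & subregular_at T r kappa.

End Defs.

From HB Require Import structures.
From mathcomp Require Import all_boot all_order all_algebra.
From mathcomp Require Import all_classical all_reals all_analysis.
From mathcomp Require Import complex sesquilinear spectral ring lra.
Import Order.TTheory GRing.Theory Num.Theory numFieldNormedType.Exports.
Set Implicit Arguments. Unset Strict Implicit. Unset Printing Implicit Defensive.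
Local Open Scope ring_scope.
Local Open Scope classical_set_scope.

(* Write d(x) for the M-distance from x to Omega = T^-1(0) and let p be the
   resolvent point of an iterate z, so that A = ||z - p||_M is the length of the
   exact step.  Firm nonexpansiveness of the resolvent gives d(p)^2 + A^2 <= d(z)^2,
   and metric subregularity at p (the resolvent points stay in the ball of radius r
   by quasi-Fejer monotonicity of the iterates) gives alpha d(p) <= A since
   sigma >= kappa alpha.  With d(z) <= d(p) + A, this makes the step length
   comparable to the distance, (1 - 1/sqrt(alpha^2 + 1)) d(z) <= A <= d(z), and
   makes the exact relaxed step contract d.  An inexact step perturbs these
   comparisons by factors 1 +- delta, giving
   ||z^(k+1) - z^k|| <= gamma/(1 - delta) d(z^k),
   gamma (1 - 1/sqrt(alpha^2 + 1))/(1 + delta) d(z^k) <= ||z^(k+1) - z^k|| and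
   d(z^(k+1)) <= rho d(z^k); chaining them from j to k yields the constant C. *)

Lemma ler_of_sqr (R : realDomainType) (a b : R) : 0 <= b -> a ^+ 2 <= b ^+ 2 -> a <= b.
Proof.
move=> b0 ab; have [a0|a0] := lerP a 0; first exact: le_trans a0 b0.
by rewrite -(@ler_pXn2r _ 2) // nnegrE ltW.
Qed.

Section InnerProduct.
Variables (R : realType) (n : nat).
Implicit Types (x y z : 'cV[R]_n) (M : 'M[R]_n).

Lemma ipE x y : ip x y = (x^T *m y) 0 0.
Proof. by rewrite /ip mxE; apply: eq_bigr => i _; rewrite mxE. Qed.

Lemma ipC x y : ip x y = ip y x.
Proof. by apply: eq_bigr => i _; rewrite mulrC. Qed.

Lemma ipDl x y z : ip (x + y) z = ip x z + ip y z.
Proof. by rewrite /ip -big_split; apply: eq_bigr => i _; rewrite !mxE mulrDl. Qed.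

Lemma ipZl a x z : ip (a *: x) z = a * ip x z.
Proof. by rewrite /ip mulr_sumr; apply: eq_bigr => i _; rewrite !mxE mulrA. Qed.

Lemma ipDr x y z : ip z (x + y) = ip z x + ip z y.
Proof. by rewrite ipC ipDl !(ipC z). Qed.

Lemma ipZr a x z : ip z (a *: x) = a * ip z x.
Proof. by rewrite ipC ipZl ipC. Qed.

Lemma ip0r x : ip x 0 = 0.
Proof. by rewrite -(scale0r 0) ipZr mul0r. Qed.

Lemma ip_mulmx_trmx M x y : ip x (M *m y) = ip (M^T *m x) y.
Proof. by rewrite !ipE trmx_mul trmxK mulmxA. Qed.

Lemma ipxx_ge0 x : 0 <= ip x x.
Proof. by rewrite sumr_ge0 // => i _; rewrite -expr2 sqr_ge0. Qed.

Lemma ipxx_eq0 x : (ip x x == 0) = (x == 0).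
Proof.
apply/eqP/eqP => [|->]; last by rewrite ip0r.
move/eqP; rewrite psumr_eq0 => [/allP x0|i _]; last by rewrite -expr2 sqr_ge0.
apply/matrixP => i j; rewrite ord1 mxE.
by have := x0 i (mem_index_enum _); rewrite /= mulf_eq0 orbb => /eqP.
Qed.

Lemma self_adjoint_pd1 : self_adjoint_pd (1%:M : 'M[R]_n).
Proof.
split=> [|x]; first by rewrite trmx1.
by rewrite mul1mx lt0r ipxx_eq0 ipxx_ge0 andbT.
Qed.

Lemma enormE x : enorm x = normM 1%:M x.
Proof. by rewrite /normM mul1mx. Qed.

End InnerProduct.

Section MNorm.
Variables (R : realType) (n : nat) (M : 'M[R]_n).
Hypothesis hM : self_adjoint_pd M.
Implicit Types (x y z : 'cV[R]_n).

Lemma ipM_sym x y : ip x (M *m y) = ip y (M *m x).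
Proof. by rewrite ip_mulmx_trmx hM.1 ipC. Qed.

Lemma ipM_ge0 x : 0 <= ip x (M *m x).
Proof.
have [->|x0] := eqVneq x 0; last exact/ltW/hM.2.
by rewrite mulmx0 ip0r.
Qed.

Lemma normM_ge0 x : 0 <= normM M x.
Proof. exact: sqrtr_ge0. Qed.

Lemma normM_sqr x : normM M x ^+ 2 = ip x (M *m x).
Proof. by rewrite sqr_sqrtr // ipM_ge0. Qed.

Lemma normM_eq0 x : (normM M x == 0) = (x == 0).
Proof.
rewrite sqrtr_eq0 le_eqVlt ltNge ipM_ge0 orbF.
apply/eqP/eqP => [x0|->]; last by rewrite mulmx0 ip0r.
by apply/eqP; apply: contraLR isT => /hM.2; rewrite x0 ltxx.
Qed.

Lemma normMD_sqr x y :
  normM M (x + y) ^+ 2 = normM M x ^+ 2 + 2 * ip x (M *m y) + normM M y ^+ 2.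
Proof. by rewrite !normM_sqr mulmxDr !ipDl !ipDr (ipM_sym y x); ring. Qed.

Lemma normMZ a x : normM M (a *: x) = `|a| * normM M x.
Proof.
rewrite /normM -scalemxAr ipZl ipZr mulrA -expr2 sqrtrM ?sqr_ge0 //.
by rewrite sqrtr_sqr.
Qed.

Lemma normM_distC x y : normM M (x - y) = normM M (y - x).
Proof. by rewrite -opprB -scaleN1r normMZ normrN1 mul1r. Qed.

Lemma ipM_le_normM x y : ip x (M *m y) <= normM M x * normM M y.
Proof.
have [->|x0] := eqVneq x 0; first by rewrite ipC ip0r mulr_ge0 ?normM_ge0.
have [->|y0] := eqVneq y 0; first by rewrite mulmx0 ip0r mulr_ge0 ?normM_ge0.
set a := normM M x; set b := normM M y.
have ab0 : 0 < a * b by rewrite mulr_gt0 // lt0r normM_eq0 ?x0 ?y0 normM_ge0.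
have := sqr_ge0 (normM M (b *: x + (- a) *: y)).
rewrite normMD_sqr !normMZ -scalemxAr ipZl ipZr normrN !ger0_norm ?normM_ge0 //.
rewrite -/a -/b; nra.
Qed.

Lemma normMD_le x y : normM M (x + y) <= normM M x + normM M y.
Proof.
apply: ler_of_sqr; first by rewrite addr_ge0 ?normM_ge0.
by rewrite normMD_sqr; have := ipM_le_normM x y; nra.
Qed.

Lemma normM_distD x y z : normM M (x - z) <= normM M (x - y) + normM M (y - z).
Proof. by apply: le_trans (normMD_le _ _); rewrite addrA subrK. Qed.

Lemma self_adjoint_pd_unitmx : M \in unitmx.
Proof.
rewrite unitmxE unitfE; apply/negP => /det0P [v v0 vM].
have /hM.2 : v^T != 0 by rewrite trmx_eq0.
by rewrite -{1}hM.1 -trmx_mul vM trmx0 ip0r ltxx.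
Qed.

Lemma self_adjoint_pd_eigenvalue_gt0 a : eigenvalue M a -> 0 < a.
Proof.
move=> /eigenvalueP [v vM v0]; have /hM.2 : v^T != 0 by rewrite trmx_eq0.
have -> : M *m v^T = a *: v^T by rewrite -{1}hM.1 -trmx_mul vM linearZ.
by rewrite ipZr pmulr_lgt0 // lt0r ipxx_eq0 trmx_eq0 v0 ipxx_ge0.
Qed.

End MNorm.

Lemma exp_diag_mx (K : comPzRingType) n (d : 'rV[K]_n) k :
  diag_mx d ^+ k = diag_mx (\row_i d 0 i ^+ k).
Proof.
elim: k => [|k IHk].
  by apply/matrixP => i j; rewrite !mxE expr0.
rewrite exprS IHk -mulmxE mul_diag_mx; apply/matrixP => i j.
by rewrite !mxE; case: eqP => [->|]; rewrite ?mulr0n ?mulr0 // !mulr1n exprS.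
Qed.

Section RealSpectral.
Variables (R : realType) (n : nat).
Local Notation toC := (real_complex R).
Local Open Scope complex_scope.
Local Open Scope sesquilinear_scope.

Lemma exp_unitary_conjmx (U A : 'M[R[i]]_n) k : U \is unitarymx ->
  (U^t* *m A *m U) ^+ k = U^t* *m A ^+ k *m U.
Proof.
move=> /unitarymxP UU; elim: k => [|k IHk].
  by rewrite !expr0 -idmxE mulmx1 mulmx1C.
by rewrite !exprS IHk -!mulmxE !mulmxA -(mulmxA _ U) UU mulmx1.
Qed.

Lemma ip_map_real_complex (x y : 'cV[R]_n) :
  toC (ip x y) = ((map_mx toC x)^t* *m map_mx toC y) 0 0.
Proof.
have -> : (map_mx toC x)^t* = map_mx toC x^T.
  by apply/matrixP => i j; rewrite !mxE; apply: conjc_real.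
by rewrite -map_mxM [RHS]mxE ipE.
Qed.

Lemma diag_quadform (y : 'cV[R[i]]_n) (e : 'rV[R[i]]_n) :
  (y^t* *m diag_mx e *m y) 0 0
  = \sum_i e 0 i * ((complex.Re (y i 0)) ^+ 2 + (complex.Im (y i 0)) ^+ 2)%:C.
Proof.
rewrite mul_mx_diag mxE; apply: eq_bigr => i _.
by rewrite !mxE add_Re2_Im2 sqr_normc mulrAC mulrC; congr (_ * _); exact: mulrC.
Qed.

Lemma eigenvalue_map_real_complex (M : 'M[R]_n) a :
  eigenvalue (map_mx toC M) (toC a) -> eigenvalue M a.
Proof.
by rewrite !eigenvalue_root_char -map_char_poly (fmorph_root toC).
Qed.

(* The real spectral theorem, read off the unitary diagonalisation of the
   complexification of M. *)
Lemma symmetric_quadform_spectral (M : 'M[R]_n) : M^T = M ->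
  exists2 d : 'I_n -> R, (forall i, eigenvalue M (d i)) &
    forall x, exists2 c : 'I_n -> R, (forall i, 0 <= c i) &
      forall k, ip x (M ^+ k *m x) = \sum_i d i ^+ k * c i.
Proof.
move=> MT; set MC := map_mx toC M.
have MCt : MC^t* = MC.
  by apply/matrixP => i j; rewrite !mxE -{1}MT mxE; apply: conjc_real.
have /orthomx_spectralP MCE : MC \is normalmx by apply/normalmxP; rewrite MCt.
set U := spectralmx MC in MCE; set e := spectral_diag MC in MCE.
have Uu : U \is unitarymx := spectral_unitarymx MC.
rewrite invmx_unitary // in MCE.
have /mxOverP e_real : e \is a realmx.
  apply: hermitian_spectral_diag_real; apply/is_hermitianmxP.
  by rewrite expr0 scale1r MCt.
pose d i := complex.Re (e 0 i).
have de i : (d i)%:C = e 0 i by apply: RRe_real; apply: e_real.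
exists d => [i|x].
  apply: eigenvalue_map_real_complex; rewrite de.
  apply/eigenvalueP; exists (row i U).
    rewrite -/MC -row_mul MCE !mulmxA (unitarymxP Uu) mul1mx mul_diag_mx.
    by apply/rowP => j; rewrite !mxE.
  apply: contraTneq isT => /(congr1 (fun v => v *m U^t*)).
  rewrite -row_mul (unitarymxP Uu) mul0mx => /rowP /(_ i).
  by rewrite !mxE eqxx => /eqP; rewrite oner_eq0.
set y := U *m map_mx toC x.
pose c i := (complex.Re (y i 0)) ^+ 2 + (complex.Im (y i 0)) ^+ 2.
exists c => [i|k]; first by rewrite addr_ge0 ?sqr_ge0.
have MCX : map_mx toC (M ^+ k) = MC ^+ k.
  by elim: k => [|k IHk]; rewrite ?map_mx1 // !exprS -!mulmxE map_mxM IHk.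
apply: complexI; rewrite ip_map_real_complex map_mxM rmorph_sum.
rewrite MCX MCE exp_unitary_conjmx // exp_diag_mx.
have -> : (map_mx toC x)^t* = y^t* *m U by rewrite trmx_mul map_mxM mulmxKtV.
rewrite !mulmxA -(mulmxA (y^t*) U) (unitarymxP Uu) mulmx1 -(mulmxA _ U) -/y diag_quadform.
by apply: eq_bigr => i _; rewrite mxE -de rmorphM rmorphXn.
Qed.

End RealSpectral.

Section EigenvalueBounds.
Variables (R : realType) (n : nat) (M : 'M[R]_n).
Hypothesis hM : self_adjoint_pd M.
Hypothesis hmax : is_lambda_max M 1.
Implicit Types (x : 'cV[R]_n).

Lemma quadform_le_lambda_max x :
  ip x (M *m x) <= ip x x /\ ip (M *m x) (M *m x) <= ip x (M *m x).
Proof.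
have [d d_eigen /(_ x) [c c0 cE]] := symmetric_quadform_spectral hM.1.
have d_le1 i : d i <= 1 := hmax.2 _ (d_eigen i).
have d_gt0 i : 0 < d i := self_adjoint_pd_eigenvalue_gt0 hM (d_eigen i).
have := cE 0%N; have := cE 1%N; have := cE 2%N.
rewrite expr0 mul1mx expr1 expr2 -mulmxE -mulmxA ip_mulmx_trmx hM.1 => -> -> ->.
split; apply: ler_sum => i _; have := c0 i; have := d_le1 i.
- by rewrite expr1 expr0; nra.
- by rewrite expr1 expr2 => ? ci; have := mulr_ge0 (ltW (d_gt0 i)) ci; nra.
Qed.

Lemma normM_le_enorm x : normM M x <= enorm x.
Proof. by rewrite ler_sqrt ?ipxx_ge0 //; case: (quadform_le_lambda_max x). Qed.

Lemma enorm_mulmx_le_normM x : enorm (M *m x) <= normM M x.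
Proof. by rewrite ler_sqrt ?(ipM_ge0 hM) //; case: (quadform_le_lambda_max x). Qed.

Lemma lambda_min_enorm_le_normM lmin x :
  is_lambda_min M lmin -> lmin * enorm x <= normM M x.
Proof.
move=> hmin; have l0 := self_adjoint_pd_eigenvalue_gt0 hM hmin.1.
have l1 : lmin <= 1 := hmin.2 _ hmax.1.
have l_le_sqrt : lmin <= Num.sqrt lmin.
  by rewrite -{1}(ger0_norm (ltW l0)) -sqrtr_sqr ler_sqrt ?(ltW l0) //; nra.
apply: le_trans (ler_wpM2r (sqrtr_ge0 _) l_le_sqrt) _.
rewrite -sqrtrM ?(ltW l0) // ler_sqrt ?(ipM_ge0 hM) //.
have [d d_eigen /(_ x) [c c0 cE]] := symmetric_quadform_spectral hM.1.
have := cE 0%N; have := cE 1%N; rewrite expr0 mul1mx expr1 => -> ->.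
rewrite mulr_sumr; apply: ler_sum => i _; rewrite expr1 expr0 mul1r.
by apply: ler_wpM2r; [apply: c0 | apply: hmin.2].
Qed.

End EigenvalueBounds.

Definition distM (R : realType) n (M : 'M[R]_n) (x : 'cV[R]_n) (D : set 'cV[R]_n) : R :=
  inf [set normM M (d - x) | d in D].

Section DistM.
Variables (R : realType) (n : nat) (M : 'M[R]_n) (D : set 'cV[R]_n).
Hypothesis hM : self_adjoint_pd M.
Hypothesis hD : D !=set0.
Implicit Types (x y : 'cV[R]_n).

Lemma distM_le x d : D d -> distM M x D <= normM M (d - x).
Proof.
move=> Dd; apply: ge_inf; last by exists d.
by exists 0 => _ [e _ <-]; apply: normM_ge0.
Qed.

Lemma distM_ge x c : (forall d, D d -> c <= normM M (d - x)) -> c <= distM M x D.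
Proof.
move=> lbc; apply: lb_le_inf => [|_ [d Dd <-]]; last exact: lbc.
by case: hD => d Dd; exists (normM M (d - x)), d.
Qed.

Lemma distM_ge0 x : 0 <= distM M x D.
Proof. by apply: distM_ge => d _; apply: normM_ge0. Qed.

Lemma distM_sqr_le x d : D d -> distM M x D ^+ 2 <= normM M (d - x) ^+ 2.
Proof. by move=> Dd; rewrite ler_pXn2r ?nnegrE ?normM_ge0 ?distM_ge0 ?distM_le. Qed.

Lemma distM_sqr_ge x c :
  (forall d, D d -> c <= normM M (d - x) ^+ 2) -> c <= distM M x D ^+ 2.
Proof.
move=> lbc; have [c0|c0] := lerP c 0; first by apply: le_trans c0 (sqr_ge0 _).
rewrite -(sqr_sqrtr (ltW c0)) ler_pXn2r ?nnegrE ?sqrtr_ge0 ?distM_ge0 //.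
apply: distM_ge => d Dd; apply: ler_of_sqr; first exact: normM_ge0.
by rewrite sqr_sqrtr ?lbc // ltW.
Qed.

Lemma distM_approx x e : 0 < e ->
  exists2 d, D d & normM M (d - x) < distM M x D + e.
Proof.
move=> e0; have [_ [d Dd <-] de] : exists2 r, [set normM M (d - x) | d in D] r &
    r < distM M x D + e.
  apply: inf_adherent => //; split; last by exists 0 => _ [d _ <-]; apply: normM_ge0.
  by case: hD => d Dd; exists (normM M (d - x)), d.
by exists d.
Qed.

Lemma distM_lipschitz x y : distM M x D <= distM M y D + normM M (x - y).
Proof.
rewrite -lerBlDr; apply: distM_ge => d Dd; rewrite lerBlDr.
apply: le_trans (distM_le _ Dd) _.
by apply: le_trans (normM_distD hM d y x) _; rewrite (normM_distC M y).
Qed.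

Lemma distM_le_dist x : (forall y, normM M y <= enorm y) -> distM M x D <= dist x D.
Proof.
move=> le_enorm; apply: lb_le_inf => [|_ [d Dd <-]].
  by case: hD => d Dd; exists (enorm (d - x)), d.
exact: le_trans (distM_le _ Dd) (le_enorm _).
Qed.

Lemma distM_convex x y l :
  (forall a b, D a -> D b -> D (l *: a + (1 - l) *: b)) -> 0 <= l <= 1 ->
  distM M (l *: x + (1 - l) *: y) D <= l * distM M x D + (1 - l) * distM M y D.
Proof.
move=> Dconv /andP [l0 l1]; apply/ler_addgt0Pr => e e0.
have [a Da ax] := distM_approx x e0; have [b Db /ltW b_y] := distM_approx y e0.
apply: le_trans (distM_le _ (Dconv _ _ Da Db)) _.
have -> : l *: a + (1 - l) *: b - (l *: x + (1 - l) *: y)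
    = l *: (a - x) + (1 - l) *: (b - y).
  by rewrite !scalerBr opprD addrACA.
apply: le_trans (normMD_le hM _ _) _; rewrite !normMZ !ger0_norm ?subr_ge0 //.
have l1' : 0 <= 1 - l by rewrite subr_ge0.
have := ler_wpM2l l0 (ltW ax); have := ler_wpM2l l1' b_y.
lra.
Qed.

End DistM.

(* Contraction factor of d under the exact relaxed step; [inexact_rate] is the
   rho of the theorem. *)
Definition relaxed_rate (R : realType) (g a : R) : R :=
  Num.sqrt (1 - Num.min g (2 * g - g ^+ 2) * a ^+ 2 / (a ^+ 2 + 1)).

Definition inexact_rate (R : realType) (g d a : R) : R :=
  (1 - d)^-1 * (relaxed_rate g a + d * (Num.min g 1 / Num.sqrt (a ^+ 2 + 1) + 1)).

Section Rates.
Variables (R : realType) (g a : R).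
Hypothesis g02 : 0 < g < 2.
Hypothesis a0 : 0 < a.
Local Notation s := (Num.sqrt (1 / (a ^+ 2 + 1))).
Local Notation m := (Num.min g (2 * g - g ^+ 2)).

Lemma sqr_rate_weight : s ^+ 2 = 1 / (a ^+ 2 + 1).
Proof. by rewrite sqr_sqrtr // divr_ge0 // addr_ge0 ?sqr_ge0. Qed.

Lemma rate_weight_lt1 : s < 1.
Proof.
rewrite -sqrtr1 ltr_sqrt ?ltr01 // ltr_pdivrMr ?mul1r ?ltrDr ?exprn_gt0 //.
by rewrite ltr_wpDl ?sqr_ge0.
Qed.

Lemma rate_min01 : 0 <= m <= 1.
Proof.
case/andP: g02 => g0 g2; apply/andP; split; first by rewrite le_min ltW //=; nra.
by rewrite ge_min; apply/orP; right; have := sqr_ge0 (g - 1); nra.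
Qed.

Lemma sqr_relaxed_rate : relaxed_rate g a ^+ 2 = 1 - m * (1 - s ^+ 2).
Proof.
have frac : a ^+ 2 / (a ^+ 2 + 1) = 1 - s ^+ 2.
  by rewrite sqr_rate_weight; field; rewrite gt_eqF // ltr_wpDl ?sqr_ge0.
have /andP [m0 m1] := rate_min01.
have s2 : s ^+ 2 <= 1.
  by have := rate_weight_lt1; have := sqrtr_ge0 (1 / (a ^+ 2 + 1)); nra.
have : 0 <= (1 - m) * (1 - s ^+ 2) by rewrite mulr_ge0 // subr_ge0.
by rewrite /relaxed_rate -mulrA frac => ?; apply: sqr_sqrtr; nra.
Qed.

Lemma relaxed_rate_under : g <= 1 -> (1 - g) + g * s <= relaxed_rate g a.
Proof.
move=> g1; apply: ler_of_sqr; first exact: sqrtr_ge0.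
rewrite sqr_relaxed_rate min_l; last by case/andP: g02 => g0 _; nra.
have s0 : 0 <= s := sqrtr_ge0 _; have s1 := rate_weight_lt1.
case/andP: g02 => g0 _.
have : 0 <= g * (1 - g) * (1 - s) ^+ 2.
  by rewrite mulr_ge0 ?sqr_ge0 // mulr_ge0 ?subr_ge0 // ltW.
nra.
Qed.

Lemma relaxed_rate_over : 1 <= g ->
  (g - 1) ^+ 2 + (1 - (g - 1) ^+ 2) * s ^+ 2 = relaxed_rate g a ^+ 2.
Proof.
by move=> g1; rewrite sqr_relaxed_rate min_r; [ring | case/andP: g02 => g0 _; nra].
Qed.

Lemma relaxed_rate_ge : g - 1 <= relaxed_rate g a.
Proof.
have [g1|g1] := lerP g 1; first by apply: le_trans (sqrtr_ge0 _); rewrite subr_le0.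
apply: ler_of_sqr; first exact: sqrtr_ge0.
rewrite -relaxed_rate_over ?(ltW g1) // lerDl; case/andP: g02 => _ g2.
by rewrite mulr_ge0 ?sqr_ge0 // subr_ge0; nra.
Qed.

Lemma inexact_rate_ge d : 0 <= d < 1 ->
  relaxed_rate g a + g * d / (1 - d) <= inexact_rate g d a.
Proof.
case/andP=> d0 d1; rewrite /inexact_rate; set X := Num.min g 1 / _.
have X0 : 0 <= X by rewrite divr_ge0 ?sqrtr_ge0 // le_min ler01 ltW //; case/andP: g02.
have d1' : 0 < 1 - d by rewrite subr_gt0.
rewrite -subr_ge0.
have -> : (1 - d)^-1 * (relaxed_rate g a + d * (X + 1)) - (relaxed_rate g a + g * d / (1 - d))
    = d * (relaxed_rate g a - (g - 1) + X) / (1 - d).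
  by field; rewrite gt_eqF.
apply: divr_ge0 (ltW d1'); apply: mulr_ge0 d0 (addr_ge0 _ X0).
by rewrite subr_ge0 relaxed_rate_ge.
Qed.

End Rates.

Lemma zeros_convex (R : realType) n (T : 'cV[R]_n -> set 'cV[R]_n) l a b :
  maximal_monotone T -> 0 <= l <= 1 -> zeros T a -> zeros T b ->
  zeros T (l *: a + (1 - l) *: b).
Proof.
move=> [monoT maxT] /andP [l0 l1] Ta Tb; apply: maxT => y v Tyv.
have -> : l *: a + (1 - l) *: b - y = l *: (a - y) + (1 - l) *: (b - y).
  by apply/matrixP => i j; rewrite !mxE; ring.
rewrite ipDl !ipZl addr_ge0 ?mulr_ge0 ?subr_ge0 //; exact: monoT.
Qed.

Section Resolvent.
Variables (R : realType) (n : nat) (M : 'M[R]_n) (T : 'cV[R]_n -> set 'cV[R]_n).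
Variables (sigma : R) (z p : 'cV[R]_n).
Hypothesis hM : self_adjoint_pd M.
Hypothesis hT : maximal_monotone T.
Hypothesis hsigma : 0 <= sigma.
Hypothesis hp : resolvent_at T M sigma z p.
Local Notation Om := (zeros T).
Local Notation q g := (g *: p + (1 - g) *: z).

Lemma resolvent_mulmx : exists2 v, T p v & M *m (z - p) = sigma *: v.
Proof.
case: hp => v Tpv ->; exists v => //.
rewrite addrC addKr -scalemxAr mulmxA mulmxV ?mul1mx //.
exact: self_adjoint_pd_unitmx.
Qed.

Lemma resolvent_ip_ge0 zh : Om zh -> 0 <= ip (p - zh) (M *m (z - p)).
Proof.
move=> Om_zh; have [v Tpv ->] := resolvent_mulmx.
by rewrite ipZr mulr_ge0 // -[v]subr0; apply: hT.1.
Qed.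

Lemma relaxed_resolvent_sqr g zh : normM M (q g - zh) ^+ 2
  = normM M (p - zh) ^+ 2 + 2 * ((1 - g) * ip (p - zh) (M *m (z - p)))
    + (1 - g) ^+ 2 * normM M (z - p) ^+ 2.
Proof.
have -> : q g - zh = (p - zh) + (1 - g) *: (z - p).
  by apply/matrixP => i j; rewrite !mxE; ring.
rewrite normMD_sqr // normMZ // -scalemxAr ipZr exprMn real_normK // num_real //.
Qed.

Lemma resolvent_sqr zh : normM M (z - zh) ^+ 2
  = normM M (p - zh) ^+ 2 + 2 * ip (p - zh) (M *m (z - p)) + normM M (z - p) ^+ 2.
Proof.
have := relaxed_resolvent_sqr 0 zh.
by rewrite scale0r add0r subr0 scale1r mul1r expr1n mul1r.
Qed.

Lemma resolvent_firm zh : Om zh ->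
  normM M (p - zh) ^+ 2 + normM M (z - p) ^+ 2 <= normM M (z - zh) ^+ 2.
Proof.
by move=> Om_zh; rewrite (resolvent_sqr zh); have := resolvent_ip_ge0 Om_zh; lra.
Qed.

Lemma resolvent_le zh : Om zh -> normM M (p - zh) <= normM M (z - zh).
Proof.
move=> Om_zh; apply: ler_of_sqr; first exact: normM_ge0.
by apply: le_trans (resolvent_firm Om_zh); rewrite lerDl sqr_ge0.
Qed.

Lemma relaxed_resolvent_fejer g zh : 0 < g < 2 -> Om zh ->
  normM M (q g - zh) <= normM M (z - zh).
Proof.
move=> /andP [g0 g2] Om_zh; apply: ler_of_sqr; first exact: normM_ge0.
have := resolvent_ip_ge0 Om_zh; rewrite relaxed_resolvent_sqr (resolvent_sqr zh).
set G := ip _ _; set A := normM M (z - p) => G0.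
have : 0 <= g * G by rewrite mulr_ge0 // ltW.
have : 0 <= g * (2 - g) * A ^+ 2 by apply: mulr_ge0 (sqr_ge0 _); nra.
nra.
Qed.

Lemma relaxed_resolvent_over g zh : 1 <= g -> Om zh ->
  normM M (q g - zh) ^+ 2 <= normM M (p - zh) ^+ 2 + (g - 1) ^+ 2 * normM M (z - p) ^+ 2.
Proof.
move=> g1 Om_zh; rewrite relaxed_resolvent_sqr -[(1 - g) ^+ 2]sqrrN opprB.
by have := resolvent_ip_ge0 Om_zh; nra.
Qed.

Hypothesis hO : Om !=set0.
Local Notation A := (normM M (z - p)).
Local Notation s a := (Num.sqrt (1 / (a ^+ 2 + 1))).

Lemma resolvent_distM : distM M p Om ^+ 2 + A ^+ 2 <= distM M z Om ^+ 2.
Proof.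
apply: distM_sqr_ge => // zh Om_zh; rewrite (normM_distC M zh).
apply: le_trans (resolvent_firm Om_zh); rewrite lerD2r (normM_distC M p).
exact: distM_sqr_le.
Qed.

Lemma relaxed_distM_under g : 0 <= g <= 1 ->
  distM M (q g) Om <= g * distM M p Om + (1 - g) * distM M z Om.
Proof. by move=> g01; apply: distM_convex => // a b; apply: zeros_convex. Qed.

Lemma relaxed_distM_over g : 1 <= g ->
  distM M (q g) Om ^+ 2 <= distM M p Om ^+ 2 + (g - 1) ^+ 2 * A ^+ 2.
Proof.
move=> g1; rewrite -lerBlDr; apply: distM_sqr_ge => // zh Om_zh; rewrite lerBlDr.
apply: le_trans (distM_sqr_le M hO _ Om_zh) _.
by rewrite normM_distC (normM_distC M zh); apply: relaxed_resolvent_over.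
Qed.

Lemma resolvent_subregular a kappa r : is_lambda_max M 1 ->
  subregular_at T r kappa -> kappa * a <= sigma -> enorm p <= r -> 0 < a ->
  a * distM M p Om <= A.
Proof.
move=> hmax reg sigma_ge p_r a0; have [v Tpv Mzp] := resolvent_mulmx.
have v0 : 0 <= enorm v := sqrtr_ge0 _.
have sigma_v : sigma * enorm v <= A.
  have -> : sigma * enorm v = enorm (M *m (z - p)) by rewrite Mzp !enormE normMZ ger0_norm.
  exact: enorm_mulmx_le_normM.
have := distM_le_dist hO p (normM_le_enorm hM hmax).
move=> /le_trans /(_ (reg p p_r v Tpv)) /(ler_wpM2l (ltW a0)).
by move: sigma_v; have := ler_wpM2r v0 sigma_ge; nra.
Qed.

Lemma resolvent_distM_le_weight a : 0 < a -> a * distM M p Om <= A ->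
  distM M p Om <= s a * distM M z Om.
Proof.
move=> a0 aB; have := resolvent_distM; have B0 := distM_ge0 M hO p.
set B := distM M p Om; set Dz := distM M z Om => BDz.
have aB2 : (a * B) ^+ 2 <= A ^+ 2.
  by apply: lerXn2r => //; rewrite nnegrE ?normM_ge0 // mulr_ge0 // ltW.
apply: ler_of_sqr; first by rewrite mulr_ge0 ?sqrtr_ge0 ?distM_ge0.
rewrite exprMn sqr_rate_weight // mulrC mul1r ler_pdivlMr ?ltr_wpDl ?sqr_ge0 //.
by rewrite exprMn in aB2; nra.
Qed.

Lemma resolvent_step_ge_distM a : 0 < a -> a * distM M p Om <= A ->
  (1 - s a) * distM M z Om <= A.
Proof.
move=> a0 aB; have := resolvent_distM_le_weight a0 aB.
have := distM_lipschitz hM hO z p; lra.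
Qed.

Lemma relaxed_resolvent_contraction g a : 0 < g < 2 -> 0 < a ->
  a * distM M p Om <= A -> distM M (q g) Om <= relaxed_rate g a * distM M z Om.
Proof.
move=> g02 a0 aB; have Bs := resolvent_distM_le_weight a0 aB.
have B0 := distM_ge0 M hO p; have Dz0 := distM_ge0 M hO z.
have [g1|/ltW g1] := lerP g 1.
  apply: le_trans (relaxed_distM_under _) _; first by case/andP: g02 => /ltW -> _.
  apply: le_trans (ler_wpM2r Dz0 (relaxed_rate_under g02 a0 g1)).
  by have := ler_wpM2l (ltW (proj1 (andP g02))) Bs; lra.
apply: ler_of_sqr; first by rewrite mulr_ge0 ?sqrtr_ge0.
apply: le_trans (relaxed_distM_over g1) _.
rewrite exprMn -(relaxed_rate_over g02 a0 g1).
have := resolvent_distM; have s0 := sqrtr_ge0 (1 / (a ^+ 2 + 1)).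
have /andP [e0 e1] : 0 <= (g - 1) ^+ 2 <= 1.
  by rewrite sqr_ge0 /=; case/andP: g02 => _ g2; nra.
have : distM M p Om ^+ 2 <= s a ^+ 2 * distM M z Om ^+ 2.
  by rewrite -exprMn ler_pXn2r ?nnegrE ?mulr_ge0.
nra.
Qed.

End Resolvent.

Section InexactStep.
Variables (R : realType) (n : nat) (M : 'M[R]_n) (T : 'cV[R]_n -> set 'cV[R]_n).
Variables (sigma eta gamma delta : R) (z w p zp : 'cV[R]_n).
Hypothesis hM : self_adjoint_pd M.
Hypothesis hT : maximal_monotone T.
Hypothesis hO : zeros T !=set0.
Hypothesis hg : 0 < gamma < 2.
Hypothesis hd : 0 <= delta < 1.
Hypothesis hsigma : 0 <= sigma.
Hypothesis hzp : zp = gamma *: w + (1 - gamma) *: z.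
Hypothesis hp : resolvent_at T M sigma z p.
Hypothesis hw : normM M (w - p) <= Num.min eta (delta * normM M (w - z)).
Local Notation Om := (zeros T).
Local Notation A := (normM M (z - p)).
Local Notation q := (gamma *: p + (1 - gamma) *: z).

Lemma inexact_step_len : normM M (zp - z) = gamma * normM M (w - z).
Proof.
have -> : zp - z = gamma *: (w - z) by rewrite hzp; apply/matrixP => i j; rewrite !mxE; ring.
by rewrite normMZ ger0_norm // ltW //; case/andP: hg.
Qed.

Lemma inexact_step_err : normM M (zp - q) = gamma * normM M (w - p).
Proof.
have -> : zp - q = gamma *: (w - p) by rewrite hzp; apply/matrixP => i j; rewrite !mxE; ring.
by rewrite normMZ ger0_norm // ltW //; case/andP: hg.
Qed.

Lemma inexact_err_le : normM M (w - p) <= delta * normM M (w - z).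
Proof. by move: hw; rewrite le_min => /andP []. Qed.

Lemma inexact_resolvent_bounds :
  (1 - delta) * normM M (w - z) <= A <= (1 + delta) * normM M (w - z).
Proof.
have := normM_distD hM w p z; have := normM_distD hM z w p.
rewrite (normM_distC M p z) (normM_distC M z w); have := inexact_err_le.
by move=> h1 h2 h3; apply/andP; split; lra.
Qed.

Lemma IGPPA_fejer zh : Om zh -> normM M (zp - zh) <= normM M (z - zh) + gamma * eta.
Proof.
move=> Om_zh; have /andP [g0 _] := hg.
have := normM_distD hM zp q zh; rewrite inexact_step_err.
have := relaxed_resolvent_fejer hM hT hsigma hp hg Om_zh.
have : normM M (w - p) <= eta by move: hw; rewrite le_min => /andP [].
move=> /(ler_wpM2l (ltW g0)); lra.
Qed.

Lemma IGPPA_step_le_distM : normM M (zp - z) <= gamma / (1 - delta) * distM M z Om.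
Proof.
case/andP: hg => g0 _; case/andP: hd => d0 d1.
have := resolvent_distM hM hT hsigma hp hO.
have := distM_ge0 M hO p; have := normM_ge0 M (z - p); have := distM_ge0 M hO z.
set B := distM M p Om; set Dz := distM M z Om => Dz0 A0 B0 BADz.
have ADz : A <= Dz by apply: ler_of_sqr => //; nra.
have /andP [wA _] := inexact_resolvent_bounds.
rewrite inexact_step_len mulrAC ler_pdivlMr ?subr_gt0 //.
have := normM_ge0 M (w - z); nra.
Qed.

Variables (alpha kappa r : R).
Hypothesis hmax : is_lambda_max M 1.
Hypothesis ha : 0 < alpha.
Hypothesis hreg : subregular_at T r kappa.
Hypothesis hka : kappa * alpha <= sigma.
Hypothesis hball : enorm p <= r.
Local Notation s := (Num.sqrt (1 / (alpha ^+ 2 + 1))).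

Let aB : alpha * distM M p Om <= A.
Proof. exact: (resolvent_subregular hM hsigma hp hO hmax hreg hka hball ha). Qed.

Lemma IGPPA_distM_le_step :
  gamma * (1 - s) * distM M z Om <= (1 + delta) * normM M (zp - z).
Proof.
case/andP: hg => g0 _; have := resolvent_step_ge_distM hM hT hsigma hp hO ha aB.
have /andP [_ Aw] := inexact_resolvent_bounds.
rewrite inexact_step_len mulrCA -mulrA; move=> /le_trans /(_ Aw) /(ler_wpM2l (ltW g0)).
by rewrite mulrA.
Qed.

Lemma IGPPA_distM_contraction :
  distM M zp Om <= inexact_rate gamma delta alpha * distM M z Om.
Proof.
case/andP: hg => g0 _; case/andP: hd => d0 d1.
apply: le_trans (distM_lipschitz hM hO zp q) _; rewrite inexact_step_err.
apply: le_trans (ler_wpM2r (distM_ge0 M hO z) (inexact_rate_ge hg ha hd)).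
rewrite mulrDl lerD ?(relaxed_resolvent_contraction hM hT hsigma hp hO hg ha aB) //.
apply: le_trans (ler_wpM2l (ltW g0) inexact_err_le) _.
have := ler_wpM2l d0 IGPPA_step_le_distM; rewrite inexact_step_len; nra.
Qed.

End InexactStep.

Lemma geometric_comparison (R : realFieldType) (a b : nat -> R) (c1 c2 rho : R) :
  0 <= c1 -> 0 < c2 -> 0 <= rho ->
  (forall m, a m <= c1 * b m) -> (forall m, c2 * b m <= a m) ->
  (forall m, b m.+1 <= rho * b m) ->
  forall j k, (j <= k)%N -> a k <= c1 / c2 * (rho ^+ (k - j) * a j).
Proof.
move=> c1_ge0 c2_gt0 rho_ge0 ab ba bS j k jk.
have b_geo i : b (j + i)%N <= rho ^+ i * b j.
  elim: i => [|i IHi]; first by rewrite addn0 expr0 mul1r.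
  by rewrite addnS exprSr -mulrA (le_trans (bS _)) // mulrCA ler_wpM2l.
apply: le_trans (ab k) _; rewrite -(subnKC jk) addKn.
apply: le_trans (ler_wpM2l c1_ge0 (b_geo _)) _.
rewrite -mulrA ler_wpM2l // mulrCA ler_wpM2l ?exprn_ge0 //.
by rewrite ler_pdivlMl // ba.
Qed.

Lemma resolvent_enorm_le (R : realType) n (M : 'M[R]_n) T sigma (z p zh : 'cV[R]_n) lmin :
  self_adjoint_pd M -> maximal_monotone T -> is_lambda_max M 1 -> is_lambda_min M lmin ->
  0 <= sigma -> resolvent_at T M sigma z p -> zeros T zh ->
  enorm p <= enorm zh + lmin^-1 * normM M (z - zh).
Proof.
move=> hM hT hmax hmin hsigma hp Om_zh.
have l0 := self_adjoint_pd_eigenvalue_gt0 hM hmin.1.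
have := normMD_le (self_adjoint_pd1 R n) zh (p - zh); rewrite addrC subrK -!enormE.
move=> /le_trans; apply; rewrite lerD2l ler_pdivlMl //.
apply: le_trans (lambda_min_enorm_le_normM hM hmax (p - zh) hmin) _.
exact: (resolvent_le hM hT hsigma hp Om_zh).
Qed.

Lemma IGPPA_quasi_fejer (R : realType) n (M : 'M[R]_n) T (z : nat -> 'cV[R]_n)
    (sigma eta : nat -> R) gamma delta zh :
  self_adjoint_pd M -> maximal_monotone T -> 0 < gamma < 2 -> (forall k, 0 <= sigma k) ->
  (forall k, IGPPAstep_out T (z k) (sigma k) (eta k) delta gamma M (z k.+1)) ->
  zeros T zh -> forall m, normM M (z m - zh) <= normM M (z 0%N - zh) + gamma * series eta m.
Proof.
move=> hM hT hg hsigma hstep Om_zh; elim=> [|m IHm].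
  by rewrite /series /= big_geq // mulr0 addr0.
have [w [zE [p hp hw]]] := hstep m.
apply: le_trans (IGPPA_fejer hM hT hg (hsigma m) zE hp hw Om_zh) _.
by rewrite seriesSr mulrDr addrA lerD2r.
Qed.

Lemma IGPPA_resolvent_enorm_le (R : realType) n (M : 'M[R]_n) T (z : nat -> 'cV[R]_n)
    (sigma eta : nat -> R) gamma delta lmin zh m p :
  self_adjoint_pd M -> maximal_monotone T -> is_lambda_max M 1 -> is_lambda_min M lmin ->
  0 < gamma < 2 -> (forall k, 0 <= sigma k) -> (forall k, 0 <= eta k) -> cvgn (series eta) ->
  (forall k, IGPPAstep_out T (z k) (sigma k) (eta k) delta gamma M (z k.+1)) ->
  zeros T zh -> resolvent_at T M (sigma m) (z m) p ->
  enorm p <= enorm zh + lmin^-1 * (normM M (zh - z 0%N) + gamma * limn (series eta)).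
Proof.
move=> hM hT hmax hmin hg hsigma heta eta_cvg hstep Om_zh hp.
apply: le_trans (resolvent_enorm_le hM hT hmax hmin (hsigma m) hp Om_zh) _.
rewrite lerD2l ler_wpM2l //.
  by rewrite invr_ge0 ltW // (self_adjoint_pd_eigenvalue_gt0 hM hmin.1).
apply: le_trans (IGPPA_quasi_fejer hM hT hg hsigma hstep Om_zh m) _.
rewrite normM_distC lerD2l ler_wpM2l //; first by case/andP: hg => /ltW.
apply: (nondecreasing_cvgn_le _ eta_cvg) => a b ab.
by rewrite -subr_ge0 sub_series_geq // sumr_ge0.
Qed.

Lemma IGPPAstep_estimates (R : realType) n (M : 'M[R]_n) T (z zp : 'cV[R]_n)
    sigma eta gamma delta alpha kappa r :
  self_adjoint_pd M -> maximal_monotone T -> zeros T !=set0 -> is_lambda_max M 1 ->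
  0 < gamma < 2 -> 0 <= delta < 1 -> 0 <= sigma -> 0 < alpha ->
  subregular_at T r kappa -> kappa * alpha <= sigma ->
  IGPPAstep_out T z sigma eta delta gamma M zp ->
  (forall p, resolvent_at T M sigma z p -> enorm p <= r) ->
  [/\ normM M (zp - z) <= gamma / (1 - delta) * distM M z (zeros T),
    gamma * (1 - Num.sqrt (1 / (alpha ^+ 2 + 1))) / (1 + delta) * distM M z (zeros T)
      <= normM M (zp - z)
  & distM M zp (zeros T) <= inexact_rate gamma delta alpha * distM M z (zeros T)].
Proof.
move=> hM hT hO hmax hg hd hsigma ha hreg hka [w [zE [p hp hw]]] /(_ p hp) p_r.
split.
- exact: (IGPPA_step_le_distM hM hT hO hg hd hsigma zE hp hw).
- rewrite mulrAC ler_pdivrMr ?ltr_wpDr //; last by case/andP: hd.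
  rewrite [X in _ <= X]mulrC.
  exact: (IGPPA_distM_le_step hM hT hO hg hsigma zE hp hw hmax ha hreg hka p_r).
- exact: (IGPPA_distM_contraction hM hT hO hg hd hsigma zE hp hw hmax ha hreg hka p_r).
Qed.

Unset Implicit Arguments. Set Strict Implicit. Set Printing Implicit Defensive.

Theorem corollary3 (R : realType) (n : nat)
  (T : 'cV[R]_n -> set 'cV[R]_n) (M : 'M[R]_n) (lmin : R)
  (z : nat -> 'cV[R]_n) (sigma eta : nat -> R)
  (gamma delta r kappa alpha : R) (zbar0 : 'cV[R]_n) :
  maximal_monotone T ->
  zeros T !=set0 ->
  self_adjoint_pd M ->
  is_lambda_max M 1 ->
  is_lambda_min M lmin ->
  bounded_metric_subregular T ->
  0 < gamma < 2 ->
  0 <= delta < 1 / 2 ->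
  (forall k, 0 <= sigma k) ->
  (forall k, 0 <= eta k) ->
  cvgn (series eta) ->
  0 < inf (range sigma) ->
  (forall k, IGPPAstep_out T (z k) (sigma k) (eta k) delta gamma M (z k.+1)) ->
  zbar0 \in zeros T ->
  (forall d, d \in zeros T -> normM M (zbar0 - z 0%N) <= normM M (d - z 0%N)) ->
  enorm zbar0
    + lmin^-1 * (normM M (zbar0 - z 0%N) + gamma * limn (series eta)) <= r ->
  0 < kappa ->
  subregular_at T r kappa ->
  0 < alpha ->
  let rho := (1 - delta)^-1 *
      (Num.sqrt (1 - Num.min gamma (2 * gamma - gamma ^+ 2) * alpha ^+ 2
                       / (alpha ^+ 2 + 1))
       + delta * (Num.min gamma 1 / Num.sqrt (alpha ^+ 2 + 1) + 1)) in
  let C := (1 + delta) /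
      ((1 - delta) * (1 - Num.sqrt (1 / (alpha ^+ 2 + 1)))) in
  rho < 1 ->
  (forall k, kappa * alpha <= sigma k) ->
  forall k : nat, forall j : nat, (j <= k)%N ->
    normM M (z k.+1 - z k) <= C * (rho ^+ (k - j) * normM M (z j.+1 - z j)).
Proof.
move=> hT hO hM hmax hmin _ hg hd hsigma heta eta_cvg _ hstep zbar_in _ r_ge _ hreg ha
  rho C _ hka k j jk.
have hd1 : 0 <= delta < 1.
  by case/andP: hd => d0 d2; rewrite d0 (lt_trans d2) // ltr_pdivrMr; lra.
have /andP [g0 _] := hg; have /andP [d0 d1] := hd1.
have ball m p (hp : resolvent_at T M (sigma m) (z m) p) : enorm p <= r.
  apply: le_trans _ r_ge; have Om_zbar : zeros T zbar0 by rewrite -in_setE.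
  exact: (IGPPA_resolvent_enorm_le hM hT hmax hmin hg hsigma heta eta_cvg hstep Om_zbar hp).
have step m := IGPPAstep_estimates hM hT hO hmax hg hd1 (hsigma m) ha hreg (hka m)
  (hstep m) (ball m).
set s := Num.sqrt (1 / (alpha ^+ 2 + 1)) in step.
have s1 : 0 < 1 - s by rewrite subr_gt0 rate_weight_lt1.
have dm : 0 < 1 - delta by rewrite subr_gt0.
have dp : 0 < 1 + delta by rewrite ltr_wpDr.
have -> : C = gamma / (1 - delta) / (gamma * (1 - s) / (1 + delta)).
  by rewrite /C -/s; field; rewrite !gt_eqF.
have rho0 : 0 <= rho.
  apply: le_trans (inexact_rate_ge hg ha hd1).
  by rewrite addr_ge0 ?sqrtr_ge0 // divr_ge0 ?mulr_ge0 // ltW.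
apply: (geometric_comparison (a := fun m => normM M (z m.+1 - z m))
  (b := fun m => distM M (z m) (zeros T)) _ _ rho0 _ _ _ jk) => [||m|m|m].
- by rewrite divr_ge0 ?ltW.
- by rewrite !divr_gt0 ?mulr_gt0.
all: by case: (step m).
Qed.
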